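(* Let $R$ be a $\Gamma$-ring and $r\in R[2]$ a formal difference law in $R$. Then $(p^2_1(r))^2=1$ in $R[1]$, and the element $w=p^3_2\circ p^4_2(r^2)\in R[2]$ is a formal sum law in $R$. Moreover, if $R$ is discrete, the multiplicative map $H\mathbb{N}\to R$ determined by $w$ (sending $1_{2^n}\mapsto w^n$) equals the composite of the inclusion $H\mathbb{N}\to H\mathbb{Z}$ with the multiplicative map $H\mathbb{Z}\to R$ determined by $r$ (sending $\pm1_n\mapsto r^n$).
   Context: Let $[n]=\{0,1,\dots,n\}$, pointed at $0$. A $\Gamma$-space is a functor $F$ from the finite pointed sets $[n]$ (with pointed maps) to pointed simplicial sets with $F[0]$ a point; for a pointed map $f$ we write $f$ also for $F(f)$; $\Sigma_n$ acts on $F[n]$ via permutations of $\{1,\dots,n\}$. We identify $[n]\wedge[m]$ with $[nm]$ via $i\wedge j\mapsto (j-1)n+i$. A $\Gamma$-ring is a $\Gamma$-space $R$ with unit $1\in R[1]$ (image of the unit map $\eta$) and associative unital multiplication given by natural maps $R(K)\wedge R(L)\to R(K\wedge L)$, $p\wedge q\mapsto pq$; it is discrete if all $R(K)$ are sets; $0\in R[1]$ denotes the basepoint. For $x\in R[2]$, $x^k\in R[2^k]$ is the $k$-fold product. Maps: $p^n_i:[n]\to[n-1]$, $p^n_i(j)=j$ ($j<i$), $p^n_i(i)=0$, $p^n_i(j)=j-1$ ($j>i$); for $1\le i<j\le n$ and $1\le k\le n-1$, $s^n_{i,j,k}:[n]\to[n-1]$ sends $0\mapsto0$, $i,j\mapsto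 k$, and the remaining elements order-preservingly and bijectively onto $\{1,\dots,n-1\}\setminus\{k\}$; $d^n_j:[n-1]\to[n]$ is the order-preserving injection missing $j$. $H\mathbb{Z}$ (resp. $H\mathbb{N}$) is the $\Gamma$-ring with $H\mathbb{Z}(K)$ the reduced free abelian group (resp. free commutative monoid) on $K$, pointed maps acting by summing coefficients along fibres, unit the inclusion of generators, multiplication $(\sum a_k k)(\sum b_l l)=\sum a_kb_l (k\wedge l)$. $1_n=(1,\dots,1)\in H\mathbb N[n]$ and $\pm1_n=(1,-1)^n\in H\mathbb{Z}[2^n]$. For $k\ge1$, split $\{1,\dots,2^k\}=A_+\sqcup A_-$ where $i\in A_+$ iff the binary expansion of $i-1$ has an even number of digits $1$ (so $\pm1_k$ has entry $1$ on $A_+$ and $-1$ on $A_-$). The special action of $\Sigma_{2^{k-1}}\times\Sigma_{2^{k-1}}$ on $F[2^k]$ is the action of the group of permutations of $\{1,\dots,2^k\}$ preserving $A_+$ and $A_-$. Let $\sigma$ be the nontrivial element of $\Sigma_2$. A formal sum law in $R$ is $w\in R[2]$ with $p^2_1(w)=p^2_2(w)=1$ and $w^k$ fixed by $\Sigma_{2^k}$ for all $k\ge1$. A formal difference law in $R$ is $r\in R[2]$ such that: (1) $p^2_2(r)=1$ and $s^2_{1,2,1}(r)=0$; (2) $p^2_1(r)\,r=r\,p^2_1(r)=\sigma(r)$ in $R[2]$; (3) for every $k\ge1$, $r^k$ is fixed under the special action of $\Sigma_{2^{k-1}}\times\Sigma_{2^{k-1}}$; (4) for every $k\ge1$, all $1\le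 i<j\le 2^k$ with one of $i,j$ in $A_+$ and the other in $A_-$, and all $1\le l\le 2^k-1$: $s^{2^k}_{i,j,l}(r^k)=d^{2^k-1}_l\,p^{2^k-1}_i\,p^{2^k}_j(r^k)$. *)

From HB Require Import structures.
From mathcomp Require Import all_boot all_algebra.
Set Implicit Arguments. Unset Strict Implicit. Unset Printing Implicit Defensive.
Import GRing.Theory.

(* ---------- finite pointed sets [n] = 'I_n.+1, pointed at ord0 ---------- *)

Definition ptd_map n m (f : {ffun 'I_n.+1 -> 'I_m.+1}) : Prop := f ord0 = ord0.

Definition mono_map k l (f : {ffun 'I_k.+1 -> 'I_l.+1}) : Prop :=
  forall a b : 'I_k.+1, a <= b -> f a <= f b.

(* turning a nat function into a map [n] -> [m] (out-of-range values go to 0) *)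
Definition mkmap n m (f : nat -> nat) : {ffun 'I_n.+1 -> 'I_m.+1} :=
  [ffun t : 'I_n.+1 => inord (f t)].

(* the "identity" [a] -> [b]; used to transport along a = b (e.g. n*m*p = n*(m*p)) *)
Definition relabel a b : {ffun 'I_a.+1 -> 'I_b.+1} := mkmap a b id.

(* f /\ g : [n] /\ [m] -> [n'] /\ [m'], with [n] /\ [m] = [nm] via
   i /\ j |-> (j-1) n + i *)
Definition smash n m n' m' (f : {ffun 'I_n.+1 -> 'I_n'.+1})
    (g : {ffun 'I_m.+1 -> 'I_m'.+1}) : {ffun 'I_(n * m).+1 -> 'I_(n' * m').+1} :=
  mkmap (n * m) (n' * m') (fun t =>
    if t == 0 then 0 else
    let i := (t.-1 %% n).+1 in
    let j := (t.-1 %/ n).+1 in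
    let fi := nat_of_ord (f (inord i)) in
    let gj := nat_of_ord (g (inord j)) in
    if (fi == 0) || (gj == 0) then 0 else gj.-1 * n' + fi).

(* gs_obj n k = k-simplices of F[n];  gs_sact = simplicial operators
   (contravariant in Delta), gs_gact = F(f) for pointed f : [n] -> [m]. *)
Record GammaSpace := {
  gs_obj : nat -> nat -> Type;
  gs_pt : forall n k, gs_obj n k;
  gs_sact : forall n k l, {ffun 'I_k.+1 -> 'I_l.+1} -> gs_obj n l -> gs_obj n k;
  gs_gact : forall n m k, {ffun 'I_n.+1 -> 'I_m.+1} -> gs_obj n k -> gs_obj m k;
  gs_sact_id : forall n k (x : gs_obj n k), gs_sact [ffun t => t] x = x;
  gs_sact_comp : forall n k l p (f : {ffun 'I_k.+1 -> 'I_l.+1})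
      (g : {ffun 'I_l.+1 -> 'I_p.+1}) (x : gs_obj n p),
      mono_map f -> mono_map g ->
      gs_sact [ffun t => g (f t)] x = gs_sact f (gs_sact g x);
  gs_sact_pt : forall n k l (f : {ffun 'I_k.+1 -> 'I_l.+1}),
      mono_map f -> gs_sact f (gs_pt n l) = gs_pt n k;
  gs_gact_id : forall n k (x : gs_obj n k), gs_gact [ffun t => t] x = x;
  gs_gact_comp : forall n m p k (f : {ffun 'I_n.+1 -> 'I_m.+1})
      (g : {ffun 'I_m.+1 -> 'I_p.+1}) (x : gs_obj n k),
      ptd_map f -> ptd_map g ->
      gs_gact [ffun t => g (f t)] x = gs_gact g (gs_gact f x);
  gs_gact_pt : forall n m k (f : {ffun 'I_n.+1 -> 'I_m.+1}),
      ptd_map f -> gs_gact f (gs_pt n k) = gs_pt m k;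
  gs_gact_sact : forall n m k l (f : {ffun 'I_n.+1 -> 'I_m.+1})
      (th : {ffun 'I_k.+1 -> 'I_l.+1}) (x : gs_obj n l),
      ptd_map f -> mono_map th ->
      gs_gact f (gs_sact th x) = gs_sact th (gs_gact f x);
  gs_zero : forall k (x : gs_obj 0 k), x = gs_pt 0 k
}.

Arguments gs_pt g n k : rename.
Arguments gs_sact {g n k l} f x : rename.
Arguments gs_gact {g n m k} f x : rename.

Definition cst k : {ffun 'I_k.+1 -> 'I_1} := [ffun _ => ord0].

Record GammaRing := {
  gr_sp :> GammaSpace;
  gr_one : gs_obj gr_sp 1 0;
  gr_mul : forall n m k, gs_obj gr_sp n k -> gs_obj gr_sp m k -> gs_obj gr_sp (n * m) k;
  gr_mul_ptl : forall n m k (y : gs_obj gr_sp m k),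
      gr_mul (gs_pt gr_sp n k) y = gs_pt gr_sp (n * m) k;
  gr_mul_ptr : forall n m k (x : gs_obj gr_sp n k),
      gr_mul x (gs_pt gr_sp m k) = gs_pt gr_sp (n * m) k;
  gr_mul_sact : forall n m k l (th : {ffun 'I_k.+1 -> 'I_l.+1})
      (x : gs_obj gr_sp n l) (y : gs_obj gr_sp m l),
      mono_map th -> gs_sact th (gr_mul x y) = gr_mul (gs_sact th x) (gs_sact th y);
  gr_mul_nat : forall n m n' m' k (f : {ffun 'I_n.+1 -> 'I_n'.+1})
      (g : {ffun 'I_m.+1 -> 'I_m'.+1}) (x : gs_obj gr_sp n k) (y : gs_obj gr_sp m k),
      ptd_map f -> ptd_map g ->
      gs_gact (@smash n m n' m' f g) (gr_mul x y) = gr_mul (gs_gact f x) (gs_gact g y);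
  gr_mul_assoc : forall n m p k (x : gs_obj gr_sp n k) (y : gs_obj gr_sp m k)
      (z : gs_obj gr_sp p k),
      gs_gact (relabel (n * m * p) (n * (m * p))) (gr_mul (gr_mul x y) z)
      = gr_mul x (gr_mul y z);
  gr_one_l : forall n k (x : gs_obj gr_sp n k),
      gs_gact (relabel (1 * n) n) (gr_mul (gs_sact (cst k) gr_one) x) = x;
  gr_one_r : forall n k (x : gs_obj gr_sp n k),
      gs_gact (relabel (n * 1) n) (gr_mul x (gs_sact (cst k) gr_one)) = x
}.

Arguments gr_one g : rename.
Arguments gr_mul {g n m k} x y : rename.

(* R discrete: every R[n] is (isomorphic to) a constant simplicial set *)
Definition discrete (R : GammaRing) : Prop :=
  forall n k, bijective (fun x : gs_obj R n 0 => gs_sact (cst k) x : gs_obj R n k).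

Fixpoint powR (R : GammaRing) n (x : gs_obj R n 0) (k : nat) : gs_obj R (n ^ k) 0 :=
  match k with
  | 0 => gs_gact (relabel 1 (n ^ 0)) (gr_one R)
  | k'.+1 => gs_gact (relabel (n ^ k' * n) (n ^ k'.+1)) (gr_mul (powR x k') x)
  end.

Definition pfun i t := if t < i then t else if t == i then 0 else t.-1.
Definition dfun j t := if t < j then t else t.+1.
Definition sfun i j k t :=
  if t == 0 then 0 else if (t == i) || (t == j) then k else
  let r := t - (i < t) - (j < t) in if r < k then r else r.+1.

Definition p_map n i := mkmap n (n - 1) (pfun i).
Definition d_map n j := mkmap (n - 1) n (dfun j).
Definition s_map n i j k := mkmap n (n - 1) (sfun i j k).
Definition swap2 := mkmap 2 2 (fun t => if t == 1 then 2 else if t == 2 then 1 else 0).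

(* A_+ : i in A_+ iff binary expansion of i-1 has an even number of 1s *)
Fixpoint popc (fuel n : nat) : nat :=
  match fuel with 0 => 0 | f.+1 => odd n + popc f n./2 end.
Definition popcount n := popc n n.
Definition Aplus (i : nat) : bool := ~~ odd (popcount i.-1).

Definition sym_fixed (R : GammaRing) N (x : gs_obj R N 0) : Prop :=
  forall s : {ffun 'I_N.+1 -> 'I_N.+1}, ptd_map s -> injective s ->
    gs_gact s x = x.

(* fixed by the special action of Sigma_{N/2} x Sigma_{N/2} *)
Definition special_fixed (R : GammaRing) N (x : gs_obj R N 0) : Prop :=
  forall s : {ffun 'I_N.+1 -> 'I_N.+1}, ptd_map s -> injective s ->
    (forall t : 'I_N.+1, Aplus (s t) = Aplus t) ->
    gs_gact s x = x.

Definition formal_sum_law (R : GammaRing) (w : gs_obj R 2 0) : Prop :=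
  [/\ gs_gact (p_map 2 1) w = gr_one R,
      gs_gact (p_map 2 2) w = gr_one R &
      forall k, 1 <= k -> sym_fixed (powR w k)].

Definition formal_difference_law (R : GammaRing) (r : gs_obj R 2 0) : Prop :=
  [/\ gs_gact (p_map 2 2) r = gr_one R /\ gs_gact (s_map 2 1 2 1) r = gs_pt R 1 0,
      gr_mul (gs_gact (p_map 2 1) r) r = gs_gact swap2 r /\
      gr_mul r (gs_gact (p_map 2 1) r) = gs_gact swap2 r,
      forall k, 1 <= k -> special_fixed (powR r k) &
      forall k, 1 <= k -> forall i j l,
        1 <= i -> i < j -> j <= 2 ^ k -> Aplus i != Aplus j ->
        1 <= l -> l <= 2 ^ k - 1 ->
        gs_gact (s_map (2 ^ k) i j l) (powR r k)
        = gs_gact (d_map (2 ^ k - 1) l)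
            (gs_gact (p_map (2 ^ k - 1) i) (gs_gact (p_map (2 ^ k) j) (powR r k)))].

Definition wOf (R : GammaRing) (r : gs_obj R 2 0) : gs_obj R 2 0 :=
  gs_gact (p_map 3 2) (gs_gact (p_map 4 2) (powR r 2)).

(* ---------- HN and HZ (discrete); element of H?[n] = coefficients on 1..n,
   stored 0-based: a t is the coefficient of t+1 ---------- *)
Definition fget (V : nmodType) n (a : {ffun 'I_n -> V}) (k : nat) : V :=
  if insub k is Some t then a t else 0%R.

Definition Hact (V : nmodType) n m (f : {ffun 'I_n.+1 -> 'I_m.+1})
    (a : {ffun 'I_n -> V}) : {ffun 'I_m -> V} :=
  [ffun s : 'I_m => (\sum_(t < n | nat_of_ord (f (inord t.+1)) == s.+1) a t)%R].

(* multiplication, with [n] /\ [m] = [nm], i /\ j |-> (j-1)n + i *)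
Definition Hmul (V : pzSemiRingType) n m (a : {ffun 'I_n -> V})
    (b : {ffun 'I_m -> V}) : {ffun 'I_(n * m) -> V} :=
  [ffun u : 'I_(n * m) => (fget a (u %% n) * fget b (u %/ n))%R].

Definition Hone (V : pzSemiRingType) : {ffun 'I_1 -> V} := [ffun _ => 1%R].
Definition Hcast (V : nmodType) a b (x : {ffun 'I_a -> V}) : {ffun 'I_b -> V} :=
  [ffun u : 'I_b => fget x u].
Fixpoint Hpow (V : pzSemiRingType) n (a : {ffun 'I_n -> V}) k : {ffun 'I_(n ^ k) -> V} :=
  match k with
  | 0 => Hcast (n ^ 0) (Hone V)
  | k'.+1 => Hcast (n ^ k'.+1) (Hmul (Hpow a k') a)
  end.

Definition onesN n : {ffun 'I_n -> nat} := [ffun _ => 1%N].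
Definition pm1 n : {ffun 'I_(2 ^ n) -> int} :=
  Hpow [ffun u : 'I_2 => if nat_of_ord u == 0 then 1%R else (-1)%R] n.

Definition incNZ n (a : {ffun 'I_n -> nat}) : {ffun 'I_n -> int} :=
  [ffun t => Posz (a t)].

(* a map of Gamma-rings HV -> R, for R discrete (so given on vertices) *)
Definition is_Hmap (V : pzSemiRingType) (R : GammaRing)
    (phi : forall n, {ffun 'I_n -> V} -> gs_obj R n 0) : Prop :=
  [/\ forall n, phi n [ffun _ => 0%R] = gs_pt R n 0,
      forall n m (f : {ffun 'I_n.+1 -> 'I_m.+1}) a,
        ptd_map f -> phi m (Hact f a) = gs_gact f (phi n a),
      forall n m a b, phi (n * m) (Hmul a b) = gr_mul (phi n a) (phi m b) &
      phi 1 (Hone V) = gr_one R].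

From mathcomp Require Import all_boot all_algebra.
From mathcomp Require Import zify.
Set Implicit Arguments. Unset Strict Implicit. Unset Printing Implicit Defensive.
Import GRing.Theory.

(* Let r be a formal difference law in a Gamma-ring R and write u = p_1(r).
   1. Applying p_1 to the axiom  u r = sigma(r)  gives
      u u = p_1 sigma (r) = p_2(r) = 1.
   2. w = p_2 p_2 (r^2) is the image of r r under the fold map
      q : [4] -> [2], so its projections are p_1(w) = u u = 1 and
      p_2(w) = 1 1 = 1.  Iterating, w^k is the image of r^(2k) under the fold
      map G_k = q /\ ... /\ q : [4^k] -> [2^k], whose nonzero fibres are
      singletons contained in A_+ and covering {1,...,2^k}.  Every permutation
      of {1,...,2^k} therefore lifts along G_k to a permutation of
      {1,...,4^k} preserving A_+ and A_-, so the special symmetry of r^(2k)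
      yields the full symmetry of w^k.
   3. In HZ, p_2 p_2 (+-1_2) = 1_2, so a map psi : HZ -> R with
      psi(+-1_n) = r^n sends 1_(2^k) to w^k, as phi does.  Every element of
      HN is the image of some 1_N under a pointed map, hence phi and psi agree
      on HN.
   Only p_2(r) = 1, the first half of axiom (2) and axiom (3) are used. *)

Lemma ptd_mkmap n m f : f 0 = 0 -> ptd_map (mkmap n m f).
Proof. by move=> f0; rewrite /ptd_map ffunE f0; apply: val_inj; rewrite /= inordK. Qed.

Lemma p_map_ptd n i : ptd_map (p_map n i).
Proof. by apply: ptd_mkmap; rewrite /pfun; case: (0 < i); case: (0 == i). Qed.

Lemma mkmap_ext n m f g :
  (forall t, t <= n -> f t = g t) -> mkmap n m f = mkmap n m g.
Proof. by move=> fg; apply/ffunP => t; rewrite !ffunE fg // -ltnS. Qed.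

Lemma mkmapE n m (F : {ffun 'I_n.+1 -> 'I_m.+1}) :
  F = mkmap n m (fun t => nat_of_ord (F (inord t))).
Proof. by apply/ffunP => t; rewrite ffunE !inord_val. Qed.

Section PointedMaps.
Variable F : GammaSpace.

Lemma gact_mkmap_comp a b c k (f g : nat -> nat) (x : gs_obj F c k) :
  f 0 = 0 -> g 0 = 0 -> (forall t, t <= c -> g t <= a) ->
  gs_gact (mkmap a b f) (gs_gact (mkmap c a g) x)
  = gs_gact (mkmap c b (fun t => f (g t))) x.
Proof.
move=> f0 g0 g_le; rewrite -gs_gact_comp; try exact: ptd_mkmap.
congr gs_gact; apply/ffunP => t; rewrite !ffunE.
by rewrite inordK // ltnS g_le // -ltnS.
Qed.

Lemma gact_mkmap_id a k (f : nat -> nat) (x : gs_obj F a k) :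
  (forall t, t <= a -> f t = t) -> gs_gact (mkmap a a f) x = x.
Proof.
move=> f_id; rewrite -[RHS]gs_gact_id; congr gs_gact; apply/ffunP => t.
by rewrite !ffunE; apply: val_inj; rewrite /= f_id ?inordK // -ltnS.
Qed.

End PointedMaps.

Definition smash_fun (n n' : nat) (f g : nat -> nat) (t : nat) :=
  if t == 0 then 0 else
  let i := (t.-1 %% n).+1 in
  let j := (t.-1 %/ n).+1 in
  if (f i == 0) || (g j == 0) then 0 else (g j).-1 * n' + f i.

Lemma smash_mkmap n m n' m' f g :
  0 < n -> (forall t, t <= n -> f t <= n') -> (forall t, t <= m -> g t <= m') ->
  smash (mkmap n n' f) (mkmap m m' g) = mkmap (n * m) (n' * m') (smash_fun n n' f g).
Proof.
move=> n_gt0 f_le g_le; apply/ffunP => t; rewrite !ffunE /smash_fun.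
move: (nat_of_ord t) (ltn_ord t) => u u_lt; case: (u =P 0) => // u_neq0.
have u'_lt : u.-1 < n * m by case: u u_neq0 u_lt.
have i_le : (u.-1 %% n).+1 <= n by rewrite ltn_pmod.
have j_le : (u.-1 %/ n).+1 <= m by rewrite ltn_divLR // mulnC.
by rewrite !ffunE !inordK ?ltnS ?f_le ?g_le.
Qed.

Lemma smash_funE n n' f g a b : a < n ->
  smash_fun n n' f g (a + n * b).+1 =
  if (f a.+1 == 0) || (g b.+1 == 0) then 0 else (g b.+1).-1 * n' + f a.+1.
Proof.
move=> a_lt; have n_gt0 : 0 < n by case: n a_lt.
by rewrite /smash_fun /= addnC mulnC modnMDl divnMDl // divn_small // addn0 modn_small.
Qed.

Lemma smash_fun_id n t : 0 < n -> smash_fun n n id id t = t.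
Proof. by move=> n_gt0; rewrite /smash_fun; case: t => //= t; rewrite addnS -divn_eq. Qed.

Lemma smash_decomp n m t : 0 < n -> 1 <= t <= n * m ->
  exists a b, [/\ a < n, b < m & t = (a + n * b).+1].
Proof.
move=> n_gt0 /andP[t_ge1 t_le]; exists (t.-1 %% n), (t.-1 %/ n); split.
- by rewrite ltn_pmod.
- by rewrite ltn_divLR // mulnC; case: t t_ge1 t_le.
- by case: t t_ge1 t_le => //= t _ _; rewrite addnC mulnC -divn_eq.
Qed.

Section GammaRingMaps.
Variable R : GammaRing.

Lemma mul_mkmap n m n' m' k f g (x : gs_obj R n k) (y : gs_obj R m k) :
  0 < n -> f 0 = 0 -> g 0 = 0 ->
  (forall t, t <= n -> f t <= n') -> (forall t, t <= m -> g t <= m') ->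
  gr_mul (gs_gact (mkmap n n' f) x) (gs_gact (mkmap m m' g) y) =
  gs_gact (mkmap (n * m) (n' * m') (smash_fun n n' f g)) (gr_mul x y).
Proof.
by move=> n_gt0 f0 g0 f_le g_le; rewrite -smash_mkmap // gr_mul_nat //; exact: ptd_mkmap.
Qed.

Lemma mul1R n (x : gs_obj R n 0) :
  gs_gact (mkmap (1 * n) n id) (gr_mul (gr_one R) x) = x.
Proof.
have cst0 : cst 0 = [ffun t => t] by apply/ffunP => t; rewrite !ffunE (ord1 t).
by rewrite -{2}(gr_one_l x) cst0 gs_sact_id.
Qed.

Lemma powR1 n (x : gs_obj R n 0) : powR x 1 = x.
Proof. by rewrite /= [gs_gact (relabel 1 _) _]gact_mkmap_id //; exact: mul1R. Qed.

(* Associativity in the form needed to peel two factors off r^(m+2). *)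
Lemma powR_SS n m (x : gs_obj R n 0) : 0 < n ->
  gr_mul (powR x m) (gr_mul x x)
  = gs_gact (mkmap (n ^ m.+2) (n ^ m * (n * n)) id) (powR x m.+2).
Proof.
move=> n_gt0; have nm_gt0 : 0 < n ^ m by rewrite expn_gt0 n_gt0.
have nm1 : n ^ m * n = n ^ m.+1 by rewrite expnSr.
have powSS : powR x m.+2 = gs_gact (mkmap (n ^ m * n * n) (n ^ m.+2) id)
                                    (gr_mul (gr_mul (powR x m) x) x).
  have -> : powR x m.+2 = gs_gact (relabel (n ^ m.+1 * n) (n ^ m.+2))
      (gr_mul (gs_gact (relabel (n ^ m * n) (n ^ m.+1)) (gr_mul (powR x m) x))
              (gs_gact (mkmap n n id) x)) by rewrite gact_mkmap_id.
  rewrite /relabel mul_mkmap ?muln_gt0 ?nm_gt0 //; try by move=> t; rewrite nm1.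
  have nm1_gt0 : 0 < n ^ m.+1 by rewrite expn_gt0 n_gt0.
  rewrite gact_mkmap_comp //; last by move=> t; rewrite nm1 smash_fun_id.
  by congr gs_gact; apply: mkmap_ext => t _; rewrite nm1 smash_fun_id.
rewrite powSS gact_mkmap_comp //; first by symmetry; exact: gr_mul_assoc.
by move=> t; rewrite -!mulnA !expnS mulnC mulnA.
Qed.

End GammaRingMaps.

(* The fold map q = p^3_2 o p^4_2 : [4] -> [2]; it sends 1 |-> 1, 4 |-> 2 and
   2, 3 |-> 0.  Note that q(t) != 0 only for t in A_+ = {1, 4}. *)
Definition fold4 t := pfun 2 (pfun 2 t).

Lemma fold4_le t : t <= 4 -> fold4 t <= 2.
Proof. by case: t => [|[|[|[|[|]]]]]. Qed.

Lemma wOfE (R : GammaRing) (r : gs_obj R 2 0) :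
  wOf r = gs_gact (mkmap 4 2 fold4) (gr_mul r r).
Proof.
rewrite /wOf; change (powR r 2) with
  (gs_gact (relabel (2 ^ 1 * 2) (2 ^ 2)) (gr_mul (powR r 1) r)).
rewrite powR1 /p_map /relabel !gact_mkmap_comp //; by case=> [|[|[|[|[|]]]]].
Qed.

Section DifferenceLaw.
Variables (R : GammaRing) (r : gs_obj R 2 0).
Hypothesis p2_r : gs_gact (p_map 2 2) r = gr_one R.
Hypothesis p1_r_mul : gr_mul (gs_gact (p_map 2 1) r) r = gs_gact swap2 r.

(* p_1(r) is an involution: apply p_1 to  p_1(r) r = sigma(r). *)
Lemma p1_sqr : gr_mul (gs_gact (p_map 2 1) r) (gs_gact (p_map 2 1) r) = gr_one R.
Proof.
set u := gs_gact (p_map 2 1) r.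
have p1_ur : gs_gact (p_map 2 1) (gr_mul u r) = gr_mul u u.
  rewrite -{2}[u](gact_mkmap_id (f := id)) // /u /p_map mul_mkmap //;
    try by case=> [|[|[|]]].
  by congr gs_gact; apply: mkmap_ext; case=> [|[|[|]]].
rewrite -p1_ur p1_r_mul /swap2 /p_map gact_mkmap_comp //; last by case=> [|[|[|]]].
by rewrite -p2_r /p_map; congr gs_gact; apply: mkmap_ext; case=> [|[|[|]]].
Qed.

Lemma p1_wOf : gs_gact (p_map 2 1) (wOf r) = gr_one R.
Proof.
rewrite -p1_sqr wOfE /p_map gact_mkmap_comp //; try by case=> [|[|[|[|[|]]]]].
rewrite mul_mkmap //; try by case=> [|[|[|[|[|]]]]].
by congr gs_gact; apply: mkmap_ext; case=> [|[|[|[|[|]]]]].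
Qed.

Lemma p2_wOf : gs_gact (p_map 2 2) (wOf r) = gr_one R.
Proof.
rewrite -(mul1R (gr_one R)) -p2_r /p_map mul_mkmap //; try by case=> [|[|[|[|[|]]]]].
rewrite gact_mkmap_comp //; try by case=> [|[|[|[|[|]]]]].
rewrite wOfE gact_mkmap_comp //; try by case=> [|[|[|[|[|]]]]].
by congr gs_gact; apply: mkmap_ext; case=> [|[|[|[|[|]]]]].
Qed.

End DifferenceLaw.

Lemma popc_fuel f f' n : n <= f -> n <= f' -> popc f n = popc f' n.
Proof.
have popc0 g : popc g 0 = 0 by elim: g => //= g ->.
elim: f f' n => [|f IH] f' n; first by rewrite leqn0 => /eqP -> _; rewrite !popc0.
case: n => [|n] n_le n_le'; first by rewrite !popc0.
by case: f' n_le' => [//|f'] n_le' /=; rewrite (IH f') // leq_uphalf_double; lia.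
Qed.

Lemma popcountE n : popcount n = odd n + popcount n./2.
Proof.
case: n => [//|n]; rewrite /popcount /=; congr addn; apply: popc_fuel => //.
by rewrite leq_uphalf_double; lia.
Qed.

Lemma popcountD m a b : a < 2 ^ m ->
  popcount (a + 2 ^ m * b) = popcount a + popcount b.
Proof.
elim: m a => [|m IH] a; first by rewrite expn0 ltnS leqn0 => /eqP ->; rewrite mul1n.
move=> a_lt; rewrite popcountE [popcount a]popcountE.
have -> : (a + 2 ^ m.+1 * b)./2 = a./2 + 2 ^ m * b.
  by rewrite -!divn2 expnS -mulnA addnC [2 * _]mulnC divnMDl // addnC.
rewrite IH; last by rewrite -divn2 ltn_divLR // -expnSr.
by rewrite oddD oddM expnS oddM /= addbF addnA.
Qed.

(* Appending a block with an even digit count (b = 0 or b = 3) preserves A_+. *)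
Lemma Aplus_block m a b : a < 2 ^ m -> (b == 0) || (b == 3) ->
  Aplus (a + 2 ^ m * b).+1 = Aplus a.+1.
Proof.
move=> a_lt b03; rewrite /Aplus /= popcountD // oddD.
by case/orP: b03 => /eqP -> /=; rewrite addbF.
Qed.

Fixpoint fold_pow (k : nat) : nat -> nat :=
  if k is k'.+1 then smash_fun (2 ^ k'.*2) (2 ^ k') (fold_pow k') fold4 else id.

Lemma expn_double_succ k : 2 ^ k.+1.*2 = 2 ^ k.*2 * 4.
Proof. by rewrite doubleS !expnS mulnA mulnC. Qed.

Lemma fold_pow0 k : fold_pow k 0 = 0.
Proof. by case: k. Qed.

Lemma fold_powS k a b : a < 2 ^ k.*2 ->
  fold_pow k.+1 (a + 2 ^ k.*2 * b).+1 =
  if (fold_pow k a.+1 == 0) || (fold4 b.+1 == 0) then 0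
  else (fold4 b.+1).-1 * 2 ^ k + fold_pow k a.+1.
Proof. exact: smash_funE. Qed.

Lemma fold_pow_decomp k t : 1 <= t <= 2 ^ k.+1.*2 ->
  exists a b, [/\ a < 2 ^ k.*2, b < 4 & t = (a + 2 ^ k.*2 * b).+1].
Proof. by rewrite expn_double_succ; apply: smash_decomp; rewrite expn_gt0. Qed.

Lemma fold_pow_le k t : t <= 2 ^ k.*2 -> fold_pow k t <= 2 ^ k.
Proof.
elim: k t => [//|k IH] [|t] t_le; first by rewrite fold_pow0.
have [a [b [a_lt b_lt ->]]] := @fold_pow_decomp k t.+1 t_le.
rewrite fold_powS // expnS; have := IH a.+1 a_lt.
by case: b b_lt => [|[|[|[|b]]]] //= _; case: (fold_pow k a.+1 == 0) => //=; lia.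
Qed.

Lemma fold_pow_onto k u : 1 <= u <= 2 ^ k ->
  exists2 t, 1 <= t <= 2 ^ k.*2 & fold_pow k t = u.
Proof.
elim: k u => [|k IH] u u_range; first by exists u => //; lia.
have [u_le | u_gt] := leqP u (2 ^ k).
  have [t t_range ft] : exists2 t, 1 <= t <= 2 ^ k.*2 & fold_pow k t = u.
    by apply: IH; lia.
  exists (t.-1 + 2 ^ k.*2 * 0).+1; first by rewrite expn_double_succ; lia.
  rewrite fold_powS; last by lia.
  rewrite prednK ?ft; last by lia.
  by case: (u =P 0) => [u0|_] /=; lia.
have [t t_range ft] : exists2 t, 1 <= t <= 2 ^ k.*2 & fold_pow k t = u - 2 ^ k.
  by apply: IH; move: u_range; rewrite expnS; lia.
exists (t.-1 + 2 ^ k.*2 * 3).+1; first by rewrite expn_double_succ; lia.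
rewrite fold_powS; last by lia.
rewrite prednK ?ft; last by lia.
by case: (u - 2 ^ k =P 0) => [u0|_] /=; lia.
Qed.

Lemma fold_pow_inj k t t' : t <= 2 ^ k.*2 -> t' <= 2 ^ k.*2 ->
  fold_pow k t = fold_pow k t' -> fold_pow k t != 0 -> t = t'.
Proof.
elim: k t t' => [//|k IH] [|t] [|t'] t_le t'_le; rewrite ?fold_pow0 //.
  by move=> ->.
have [a [b [a_lt b_lt ->]]] := @fold_pow_decomp k t.+1 t_le.
have [a' [b' [a'_lt b'_lt ->]]] := @fold_pow_decomp k t'.+1 t'_le.
rewrite !fold_powS //.
have := fold_pow_le a_lt; have := fold_pow_le a'_lt; have := IH a.+1 a'.+1 a_lt a'_lt.
case: b b_lt => [|[|[|[|b]]]] //= _; case: b' b'_lt => [|[|[|[|b']]]] //= _;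
  case: (fold_pow k a.+1 =P 0) => //= fa; case: (fold_pow k a'.+1 =P 0) => //= fa'.
all: rewrite ?mul0n ?mul1n ?add0n; lia.
Qed.

Lemma fold_pow_Aplus k t : 1 <= t <= 2 ^ k.*2 -> fold_pow k t != 0 -> Aplus t.
Proof.
elim: k t => [|k IH] t t_range.
  by have -> : t = 1 by move: t_range; rewrite expn0; lia.
have [a [b [a_lt b_lt ->]]] := fold_pow_decomp t_range.
rewrite fold_powS //.
case: b b_lt => [|[|[|[|b]]]] //= _; case: (fold_pow k a.+1 =P 0) => //= fa _.
- by rewrite (@Aplus_block _ _ 0) //; apply: IH; [lia | apply/eqP].
- by rewrite (@Aplus_block _ _ 3) //; apply: IH; [lia | apply/eqP].
Qed.

Lemma powR_wOf (R : GammaRing) (r : gs_obj R 2 0) k :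
  powR (wOf r) k = gs_gact (mkmap (2 ^ k.*2) (2 ^ k) (fold_pow k)) (powR r k.*2).
Proof.
elim: k => [|k IH]; first by symmetry; apply: gact_mkmap_id.
change (powR (wOf r) k.+1) with
  (gs_gact (relabel (2 ^ k * 2) (2 ^ k.+1)) (gr_mul (powR (wOf r) k) (wOf r))).
rewrite IH wOfE mul_mkmap ?expn_gt0 ?fold_pow0 //;
  try exact: fold4_le; try exact: fold_pow_le.
rewrite /relabel gact_mkmap_comp //; last first.
  by move=> t t_le; rewrite -expnSr; apply: (@fold_pow_le k.+1); rewrite expn_double_succ.
by rewrite powR_SS // gact_mkmap_comp // => t; rewrite -expn_double_succ.
Qed.

(* Every pointed bijection s of [M] then lifts to a pointed bijection
   of [N] that preserves A_+ and A_-: move G^-1(u) to G^-1(s u) and fix the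
   zero fibre pointwise. *)
Section FoldLift.
Variables (N M : nat) (G : nat -> nat).
Hypothesis G0 : G 0 = 0.
Hypothesis G_le : forall t, t <= N -> G t <= M.
Hypothesis G_onto : forall u, 1 <= u <= M -> exists2 t, 1 <= t <= N & G t = u.
Hypothesis G_inj :
  forall t t', t <= N -> t' <= N -> G t = G t' -> G t != 0 -> t = t'.
Hypothesis G_Aplus : forall t, 1 <= t <= N -> G t != 0 -> Aplus t.

Definition fold_section u := find (fun t => G t == u) (iota 0 N.+1).

Lemma fold_sectionP u : 1 <= u <= M ->
  fold_section u <= N /\ G (fold_section u) = u.
Proof.
move=> u_range; have [t t_range Gt] := G_onto u_range.
have has_u : has (fun t => G t == u) (iota 0 N.+1).
  by apply/hasP; exists t; [rewrite mem_iota; lia | apply/eqP].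
have := has_u; rewrite has_find size_iota ltnS => sec_le; split => //.
by have /eqP := nth_find 0 has_u; rewrite nth_iota // add0n.
Qed.

Section Lift.
Variable s : nat -> nat.
Hypothesis s0 : s 0 = 0.
Hypothesis s_le : forall u, s u <= M.
Hypothesis s_inj : forall u v, u <= M -> v <= M -> s u = s v -> u = v.

Lemma s_neq0 u : 1 <= u <= M -> s u != 0.
Proof.
move=> /andP[u_gt0 u_le]; apply/eqP => su0.
by have := s_inj u_le (leq0n M); rewrite s0 su0 => /(_ erefl) u0; rewrite u0 in u_gt0.
Qed.

(* It is pointed, injective, commutes with G and
   preserves A_+ (both its argument and its value lie in A_+ when G is
   nonzero). *)
Definition lift_fun t := if G t != 0 then fold_section (s (G t)) else t.

Lemma lift_fun0 : lift_fun 0 = 0.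
Proof. by rewrite /lift_fun G0. Qed.

Lemma lift_funP t : t <= N -> lift_fun t <= N /\ G (lift_fun t) = s (G t).
Proof.
move=> t_le; rewrite /lift_fun.
case: (G t =P 0) => [-> | /eqP Gt] /=; first by rewrite s0.
have Gt_range : 1 <= G t <= M by rewrite G_le // andbT lt0n.
by apply: fold_sectionP; rewrite s_le andbT lt0n s_neq0.
Qed.

Lemma lift_fun_inj t t' : t <= N -> t' <= N -> lift_fun t = lift_fun t' -> t = t'.
Proof.
move=> t_le t'_le lift_eq.
have [_ G_lift] := lift_funP t_le; have [_ G_lift'] := lift_funP t'_le.
have sG_eq : s (G t) = s (G t') by rewrite -G_lift -G_lift' lift_eq.
have G_eq : G t = G t' by apply: s_inj => //; apply: G_le.
case: (G t =P 0) => [Gt0 | /eqP Gt]; last exact: G_inj.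
by move: lift_eq; rewrite /lift_fun Gt0 -G_eq Gt0.
Qed.

Lemma lift_fun_Aplus t : t <= N -> Aplus (lift_fun t) = Aplus t.
Proof.
move=> t_le; have [lift_le G_lift] := lift_funP t_le.
rewrite /lift_fun; case: ifP => // Gt.
have t_gt0 : 0 < t by case: t t_le Gt G_lift lift_le => //; rewrite G0.
have Gt_range : 1 <= G t <= M by rewrite G_le // andbT lt0n.
move: G_lift lift_le; rewrite /lift_fun Gt => G_lift lift_le.
have G_sec : G (fold_section (s (G t))) != 0 by rewrite G_lift s_neq0.
have sec_gt0 : 0 < fold_section (s (G t)).
  by move: G_sec; case: (fold_section _) => //; rewrite G0.
by rewrite !G_Aplus ?t_gt0 ?sec_gt0 ?t_le ?lift_le.
Qed.

End Lift.

Lemma sym_fixed_fold (R : GammaRing) (x : gs_obj R N 0) :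
  special_fixed x -> sym_fixed (gs_gact (mkmap N M G) x).
Proof.
move=> x_fixed s s_ptd s_inj.
pose sf u := nat_of_ord (s (inord u)).
have sf0 : sf 0 = 0.
  by rewrite /sf (_ : inord 0 = ord0) ?s_ptd //; apply: val_inj; rewrite /= inordK.
have sf_le u : sf u <= M by rewrite /sf -ltnS.
have sf_inj u v : u <= M -> v <= M -> sf u = sf v -> u = v.
  by move=> u_le v_le /val_inj /s_inj /(congr1 (@nat_of_ord _)); rewrite !inordK.
pose tau := mkmap N N (lift_fun sf).
have tauE (t : 'I_N.+1) : nat_of_ord (tau t) = lift_fun sf t.
  by rewrite /tau ffunE inordK // ltnS; case: (lift_funP sf0 sf_le sf_inj (ltn_ord t)).
have tau_inj : injective tau.
  move=> t t' tau_eq; apply: val_inj; apply: (lift_fun_inj sf0 sf_le sf_inj).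
  - exact: ltn_ord t.
  - exact: ltn_ord t'.
  - by rewrite -!tauE tau_eq.
have tau_Aplus (t : 'I_N.+1) : Aplus (tau t) = Aplus t.
  by rewrite tauE lift_fun_Aplus // -ltnS.
rewrite -{2}(x_fixed tau (ptd_mkmap _ _ (lift_fun0 sf)) tau_inj tau_Aplus) /tau.
rewrite gact_mkmap_comp ?lift_fun0 ?sf0 //;
  last by move=> t /(lift_funP sf0 sf_le sf_inj)[].
rewrite [s]mkmapE gact_mkmap_comp ?G0 //.
by congr gs_gact; apply: mkmap_ext => t /(lift_funP sf0 sf_le sf_inj)[_ ->].
Qed.

End FoldLift.

Lemma sym_fixed_powR_wOf (R : GammaRing) (r : gs_obj R 2 0) k :
  special_fixed (powR r k.*2) -> sym_fixed (powR (wOf r) k).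
Proof.
rewrite powR_wOf; apply: sym_fixed_fold.
- exact: fold_pow0.
- exact: fold_pow_le.
- exact: fold_pow_onto.
- exact: fold_pow_inj.
- exact: fold_pow_Aplus.
Qed.

Lemma fget_lt (V : nmodType) n (a : {ffun 'I_n -> V}) k (k_lt : k < n) :
  fget a k = a (Ordinal k_lt).
Proof. by rewrite /fget insubT. Qed.

(* The sign vector +-1_k = (1,-1)^k has entry (-1)^(number of binary digits 1
   of t) at the point t.+1; in particular it is 1 exactly on A_+. *)
Lemma pm1E k (t : 'I_(2 ^ k)) : pm1 k t = ((-1) ^+ popcount t)%R.
Proof.
elim: k t => [|k IH] t.
  by rewrite /pm1 /= ffunE (fget_lt _ (ltn_ord t)) ffunE; case: t => -[].
have pk_gt0 : 0 < 2 ^ k by rewrite expn_gt0.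
have t_lt : t < 2 ^ k * 2 by rewrite -expnSr.
have q_lt : t %/ 2 ^ k < 2 by rewrite ltn_divLR // mulnC.
rewrite /pm1 /= -/(pm1 k) ffunE (fget_lt _ t_lt) ffunE.
rewrite (fget_lt _ (ltn_pmod t pk_gt0)) IH (fget_lt _ q_lt) ffunE /=.
rewrite [in RHS](divn_eq t (2 ^ k)) addnC mulnC popcountD ?ltn_pmod // exprD.
by case: (t %/ 2 ^ k) q_lt => [|[|]] //= _; rewrite ?mulr1 ?expr1.
Qed.

Lemma Hact_mkmap (V : nmodType) n m f (a : {ffun 'I_n -> V}) :
  (forall t, t <= n -> f t <= m) ->
  Hact (mkmap n m f) a = [ffun s : 'I_m => (\sum_(t < n | f t.+1 == s.+1) a t)%R].
Proof.
move=> f_le; apply/ffunP => s; rewrite !ffunE; apply: eq_bigl => t.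
by rewrite !ffunE !inordK // ltnS // f_le.
Qed.

(* In HZ the fold map sends +-1_2 = (1,-1,-1,1) to 1_2 = (1,1). *)
Lemma fold_pm1 : Hact (p_map 3 2) (Hact (p_map 4 2) (pm1 2)) = incNZ (onesN 2).
Proof.
rewrite /p_map !Hact_mkmap; try by case=> [|[|[|[|[|]]]]].
apply/ffunP => -[[|[|//]] ?]; rewrite !ffunE !big_mkcond !big_ord_recl big_ord0 /=.
all: by rewrite !ffunE !big_mkcond !big_ord_recl big_ord0 /= ?addr0 ?add0r (@pm1E 2).
Qed.

Lemma Hact_incNZ n m (f : {ffun 'I_n.+1 -> 'I_m.+1}) (a : {ffun 'I_n -> nat}) :
  Hact f (incNZ a) = incNZ (Hact f a).
Proof.
apply/ffunP => s; rewrite !ffunE (big_morph Posz PoszD (erefl (Posz 0))).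
by apply: eq_bigr => t _; rewrite ffunE.
Qed.

Lemma Hmul_ones n m : 0 < n ->
  Hmul (incNZ (onesN n)) (incNZ (onesN m)) = incNZ (onesN (n * m)).
Proof.
move=> n_gt0; apply/ffunP => u; rewrite !ffunE.
have u_mod : u %% n < n by rewrite ltn_pmod.
have u_div : u %/ n < m by rewrite ltn_divLR // (mulnC m n).
by rewrite (fget_lt _ u_mod) (fget_lt _ u_div) !ffunE.
Qed.

Lemma Hact_relabel_ones a b : a = b ->
  Hact (relabel a b) (incNZ (onesN a)) = incNZ (onesN b).
Proof.
move=> <-; rewrite /relabel Hact_mkmap //; apply/ffunP => s.
rewrite !ffunE (bigD1 s) //= big1 ?ffunE ?addr0 // => t /andP[/eqP t_s t_neq].
by case/eqP: t_neq; apply: val_inj; case: t_s.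
Qed.

Lemma Hact_ones_update N n (f : {ffun 'I_N.+1 -> 'I_n.+1}) m (i : 'I_n) :
  m < N -> f (inord m.+1) = ord0 ->
  Hact [ffun t : 'I_N.+1 => if nat_of_ord t == m.+1 then inord i.+1 else f t] (onesN N)
  = [ffun s => Hact f (onesN N) s + (s == i)].
Proof.
move=> m_lt fm0; apply/ffunP => s.
rewrite !ffunE [LHS]big_mkcond [in RHS]big_mkcond /=.
rewrite (bigD1 (Ordinal m_lt)) //= [in RHS](bigD1 (Ordinal m_lt)) //=.
rewrite !ffunE inordK // eqxx fm0 inordK ?ltnS //= add0r addrC.
congr (_ + _)%R; last first.
  have -> : (i.+1 == s.+1) = (s == i) by rewrite eqSS eq_sym.
  by case: (s == i).
apply: eq_bigr => t t_neq; rewrite !ffunE inordK ?ltnS // eqSS.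
rewrite (_ : (t == m :> nat) = false) //.
by apply: contraNF t_neq => /eqP t_m; apply/eqP/val_inj.
Qed.

Lemma Hact_ones_onto N m n (a : {ffun 'I_n -> nat}) :
  \sum_(i < n) a i = m -> m <= N ->
  exists f : {ffun 'I_N.+1 -> 'I_n.+1},
    [/\ ptd_map f, Hact f (onesN N) = a & forall t : 'I_N.+1, m < t -> f t = ord0].
Proof.
elim: m a => [|m IH] a a_sum m_le.
  exists [ffun _ => ord0].
  split; [by rewrite /ptd_map ffunE | | by move=> t; rewrite ffunE].
  apply/ffunP => s; rewrite !ffunE big_pred0 => [|t]; last by rewrite ffunE.
  by move: a_sum; rewrite (bigD1 s) //=; lia.
have [i ai_gt0] : exists i, 0 < a i.
  case: (pickP (fun j => 0 < a j)) => [j aj_gt0 | a0]; first by exists j.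
  by move: a_sum; rewrite big1 // => j _; apply/eqP; rewrite -leqn0 leqNgt a0.
pose a' := [ffun j => a j - (j == i)].
have a'_sum : \sum_(j < n) a' j = m.
  move: a_sum; rewrite (bigD1 i) // [in X in _ -> X](bigD1 i) //= !ffunE eqxx.
  have -> : \sum_(j < n | j != i) a' j = \sum_(j < n | j != i) a j.
    by apply: eq_bigr => j /negbTE j_neq; rewrite ffunE j_neq subn0.
  rewrite (_ : a i - true = a i - 1) //.
  by move: ai_gt0; move: (a i) (\sum_(j < n | j != i) a j) => x S; lia.
have [f [f_ptd f_ones f_zero]] := IH a' a'_sum (ltnW m_le).
exists [ffun t : 'I_N.+1 => if nat_of_ord t == m.+1 then inord i.+1 else f t]; split.
- by rewrite /ptd_map ffunE.
- rewrite Hact_ones_update //; last by rewrite f_zero // inordK.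
  apply/ffunP => s; rewrite ffunE f_ones ffunE.
  by case: (s =P i) => [-> | _] /=; rewrite ?subn0 ?addn0 // subnK.
- by move=> t t_gt; rewrite ffunE ifN_eqC ?f_zero //; lia.
Qed.

Lemma Hmap_ones_agree (R : GammaRing)
    (phi : forall n, {ffun 'I_n -> nat} -> gs_obj R n 0)
    (psi : forall n, {ffun 'I_n -> int} -> gs_obj R n 0) :
  is_Hmap phi -> is_Hmap psi ->
  (forall k, 1 <= k ->
     phi (2 ^ k) (onesN (2 ^ k)) = psi (2 ^ k) (incNZ (onesN (2 ^ k)))) ->
  forall n (a : {ffun 'I_n -> nat}), phi n a = psi n (incNZ a).
Proof.
move=> [_ phi_act _ _] [_ psi_act _ _] phi_psi n a.
set S := \sum_(i < n) a i.
have S_le : S <= 2 ^ S.+1 by rewrite expnS; have := ltn_expl S (isT : 1 < 2); lia.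
have [f [f_ptd <- _]] := Hact_ones_onto (erefl S) S_le.
by rewrite phi_act // phi_psi // -psi_act // Hact_incNZ.
Qed.

Lemma Hmap_ones_wOf (R : GammaRing) (r : gs_obj R 2 0)
    (psi : forall n, {ffun 'I_n -> int} -> gs_obj R n 0) :
  is_Hmap psi -> (forall n, 1 <= n -> psi (2 ^ n) (pm1 n) = powR r n) ->
  forall k, psi (2 ^ k) (incNZ (onesN (2 ^ k))) = powR (wOf r) k.
Proof.
move=> [_ psi_act psi_mul psi_one] psi_pm1.
have psi_ones2 : psi 2 (incNZ (onesN 2)) = wOf r.
  rewrite /wOf -(psi_pm1 2) // -!psi_act; try exact: p_map_ptd.
  exact: esym (congr1 (psi 2) fold_pm1).
elim=> [|k IH].
  rewrite /= -psi_one -psi_act; last exact: ptd_mkmap.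
  have -> : Hone int = incNZ (onesN 1) by apply/ffunP => t; rewrite !ffunE.
  by rewrite Hact_relabel_ones.
change (powR (wOf r) k.+1) with
  (gs_gact (relabel (2 ^ k * 2) (2 ^ k.+1)) (gr_mul (powR (wOf r) k) (wOf r))).
rewrite -IH -psi_ones2 -psi_mul -psi_act; last exact: ptd_mkmap.
by rewrite Hmul_ones ?expn_gt0 // Hact_relabel_ones // expnSr.
Qed.

Theorem mainTheorem3 (R : GammaRing) (r : gs_obj R 2 0) :
  formal_difference_law r ->
  [/\ gr_mul (gs_gact (p_map 2 1) r) (gs_gact (p_map 2 1) r) = gr_one R,
      formal_sum_law (wOf r) &
      discrete R ->
      forall (phi : forall n, {ffun 'I_n -> nat} -> gs_obj R n 0)
             (psi : forall n, {ffun 'I_n -> int} -> gs_obj R n 0),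
        is_Hmap phi -> is_Hmap psi ->
        (forall n, 1 <= n -> phi (2 ^ n) (onesN (2 ^ n)) = powR (wOf r) n) ->
        (forall n, 1 <= n -> psi (2 ^ n) (pm1 n) = powR r n) ->
        forall n (a : {ffun 'I_n -> nat}), phi n a = psi n (incNZ a)].
Proof.
move=> [[p2_r _] [p1_r_mul _] r_special _]; split.
- exact: p1_sqr.
- split; [exact: p1_wOf | exact: p2_wOf | move=> k k_ge1].
  by apply: sym_fixed_powR_wOf; apply: r_special; rewrite double_gt0.
- move=> _ phi psi phi_hom psi_hom phi_ones psi_pm1.
  apply: Hmap_ones_agree => // k k_ge1.
  by rewrite phi_ones // (Hmap_ones_wOf psi_hom psi_pm1).
Qed.
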